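(* Every finitary filter class contained in $\mathsf{BA}_\infty$ is a logical class, i.e. it is also closed under strict homomorphic images.
   Context: Structures are pairs $\langle\mathbf{A},F\rangle$ with $\mathbf{A}$ a Boolean algebra and $F\subseteq\mathbf{A}$. A homomorphism $h\colon\langle\mathbf{A},F\rangle\to\langle\mathbf{B},G\rangle$ of Boolean algebras is strict if $F=h^{-1}[G]$; $\langle\mathbf{B},G\rangle$ is a strict homomorphic image of $\langle\mathbf{A},F\rangle$ (and the latter a strict homomorphic preimage of the former) if there is a surjective strict homomorphism between them. A filter class is a class closed under isomorphism, substructures $\langle\mathbf{B},F\cap\mathbf{B}\rangle$, products $\langle\prod\mathbf{A}_i,\prod F_i\rangle$ and strict homomorphic preimages; it is finitary if it is also closed under ultraproducts; a logical class is a filter class closed under strict homomorphic images. $\mathsf{BA}_\infty$ is the class of all $\langle\mathbf{A},F\rangle$ with $F$ a non-empty upset of $\mathbf{A}$. *)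

From Stdlib Require Import FunctionalExtensionality.

Record BA := mkBA {
  car : Type;
  bjoin : car -> car -> car;
  bmeet : car -> car -> car;
  bcompl : car -> car;
  bbot : car;
  btop : car;
  joinC : forall x y, bjoin x y = bjoin y x;
  meetC : forall x y, bmeet x y = bmeet y x;
  joinA : forall x y z, bjoin x (bjoin y z) = bjoin (bjoin x y) z;
  meetA : forall x y z, bmeet x (bmeet y z) = bmeet (bmeet x y) z;
  joinKmeet : forall x y, bjoin x (bmeet x y) = x;
  meetKjoin : forall x y, bmeet x (bjoin x y) = x;
  meetDjoin : forall x y z, bmeet x (bjoin y z) = bjoin (bmeet x y) (bmeet x z);
  join0 : forall x, bjoin x bbot = x;
  meet1 : forall x, bmeet x btop = x;
  joinCompl : forall x, bjoin x (bcompl x) = btop;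
  meetCompl : forall x, bmeet x (bcompl x) = bbot
}.

Definition ble (A : BA) (x y : car A) : Prop := bmeet A x y = x.

Definition is_hom (A B : BA) (h : car A -> car B) : Prop :=
  (forall x y, h (bjoin A x y) = bjoin B (h x) (h y)) /\
  (forall x y, h (bmeet A x y) = bmeet B (h x) (h y)) /\
  (forall x, h (bcompl A x) = bcompl B (h x)) /\
  h (bbot A) = bbot B /\ h (btop A) = btop B.

Definition strict (A B : BA) (F : car A -> Prop) (G : car B -> Prop)
  (h : car A -> car B) : Prop := forall x, F x <-> G (h x).

Definition surj {X Y : Type} (h : X -> Y) : Prop := forall y, exists x, h x = y.
Definition inj {X Y : Type} (h : X -> Y) : Prop := forall x y, h x = h y -> x = y.

Section Prod.
Variables (I : Type) (A : I -> BA).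
Let P := forall i, car (A i).
Definition pjoin (x y : P) : P := fun i => bjoin (A i) (x i) (y i).
Definition pmeet (x y : P) : P := fun i => bmeet (A i) (x i) (y i).
Definition pcompl (x : P) : P := fun i => bcompl (A i) (x i).
Definition pbot : P := fun i => bbot (A i).
Definition ptop : P := fun i => btop (A i).

Ltac pw := intros; apply functional_extensionality_dep; intro i;
  unfold pjoin, pmeet, pcompl, pbot, ptop.

Definition prodBA : BA.
Proof.
refine (@mkBA P pjoin pmeet pcompl pbot ptop _ _ _ _ _ _ _ _ _ _ _).
- pw; apply joinC.
- pw; apply meetC.
- pw; apply joinA.
- pw; apply meetA.
- pw; apply joinKmeet.
- pw; apply meetKjoin.
- pw; apply meetDjoin.
- pw; apply join0.
- pw; apply meet1.
- pw; apply joinCompl.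
- pw; apply meetCompl.
Defined.
End Prod.

Definition prodF (I : Type) (A : I -> BA) (F : forall i, car (A i) -> Prop)
  : car (@prodBA I A) -> Prop := fun x => forall i, F i (x i).

Definition ultrafilter (I : Type) (U : (I -> Prop) -> Prop) : Prop :=
  U (fun _ => True) /\
  ~ U (fun _ => False) /\
  (forall X Y : I -> Prop, U X -> (forall i, X i -> Y i) -> U Y) /\
  (forall X Y : I -> Prop, U X -> U Y -> U (fun i => X i /\ Y i)) /\
  (forall X : I -> Prop, U X \/ U (fun i => ~ X i)).

Definition StrClass := forall A : BA, (car A -> Prop) -> Prop.

Definition closed_iso (K : StrClass) : Prop :=
  forall (A B : BA) (F : car A -> Prop) (G : car B -> Prop) (h : car A -> car B),
    is_hom A B h -> inj h -> surj h -> strict A B F G h -> K A F -> K B G.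

(* substructures, up to isomorphism: <B, F ∩ B> for a subalgebra embedded in A *)
Definition closed_sub (K : StrClass) : Prop :=
  forall (A B : BA) (F : car A -> Prop) (e : car B -> car A),
    is_hom B A e -> inj e -> K A F -> K B (fun x => F (e x)).

Definition closed_prod (K : StrClass) : Prop :=
  forall (I : Type) (A : I -> BA) (F : forall i, car (A i) -> Prop),
    (forall i, K (A i) (F i)) -> K (@prodBA I A) (@prodF I A F).

Definition closed_shpre (K : StrClass) : Prop :=
  forall (A B : BA) (F : car A -> Prop) (G : car B -> Prop) (h : car A -> car B),
    is_hom A B h -> surj h -> strict A B F G h -> K B G -> K A F.

Definition closed_shimg (K : StrClass) : Prop :=
  forall (A B : BA) (F : car A -> Prop) (G : car B -> Prop) (h : car A -> car B),
    is_hom A B h -> surj h -> strict A B F G h -> K A F -> K B G.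

(* <B,G> is (isomorphic to) the ultraproduct of <A_i,F_i> modulo U, witnessed by
   the (surjective homomorphic) quotient map h from the product. *)
Definition is_ultraproduct (I : Type) (A : I -> BA) (F : forall i, car (A i) -> Prop)
  (U : (I -> Prop) -> Prop) (B : BA) (G : car B -> Prop)
  (h : car (@prodBA I A) -> car B) : Prop :=
  is_hom (@prodBA I A) B h /\ surj h /\
  (forall x y : car (@prodBA I A), h x = h y <-> U (fun i => x i = y i)) /\
  (forall x : car (@prodBA I A), G (h x) <-> U (fun i => F i (x i))).

Definition closed_ultraprod (K : StrClass) : Prop :=
  forall (I : Type) (A : I -> BA) (F : forall i, car (A i) -> Prop)
    (U : (I -> Prop) -> Prop) (B : BA) (G : car B -> Prop)
    (h : car (@prodBA I A) -> car B),
    @ultrafilter I U -> (forall i, K (A i) (F i)) ->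
    @is_ultraproduct I A F U B G h -> K B G.

Definition filter_class (K : StrClass) : Prop :=
  closed_iso K /\ closed_sub K /\ closed_prod K /\ closed_shpre K.

Definition finitary_filter_class (K : StrClass) : Prop :=
  filter_class K /\ closed_ultraprod K.

Definition logical_class (K : StrClass) : Prop :=
  filter_class K /\ closed_shimg K.

Definition BA_inf : StrClass := fun A F =>
  (exists a, F a) /\ (forall x y, ble A x y -> F x -> F y).

(* Let h : <A,F> -> <B,G> be a surjective strict homomorphism with B nontrivial. Fix an
   ultrafilter phi of A containing the kernel filter {c | h c = 1}. For every c the map
   x |-> (x /\ c) \/ (phi(x) /\ -c) is an endomorphism of A, and it induces the identity on B
   when h c = 1. Index an ultrapower of <A,F> by the elements of A, along an ultrafilter that
   eventually lies below every member of the kernel filter: then h x = h y forces the two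
   families of images of x and y to agree almost everywhere, so h x |-> [c |-> image of x]
   is a well-defined embedding of B, and strictness of h makes it strict. Hence <B,G> is a
   substructure of an ultrapower of <A,F>. *)
From Stdlib Require Import FunctionalExtensionality PropExtensionality ProofIrrelevance
  Classical ClassicalEpsilon.
From mathcomp Require boolp classical_sets.
Set Bullet Behavior "Strict Subproofs".

Section BooleanAlgebra.
Variable A : BA.

Lemma meet_idem x : bmeet A x x = x.
Proof. rewrite <- (joinKmeet A x x) at 2. apply meetKjoin. Qed.

Lemma join_idem x : bjoin A x x = x.
Proof. rewrite <- (meetKjoin A x x) at 2. apply joinKmeet. Qed.

Lemma meet0 x : bmeet A x (bbot A) = bbot A.
Proof. rewrite <- (meetCompl A x), meetA, meet_idem. reflexivity. Qed.

Lemma join1 x : bjoin A x (btop A) = btop A.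
Proof. rewrite <- (joinCompl A x), joinA, join_idem. reflexivity. Qed.

Lemma meet0l x : bmeet A (bbot A) x = bbot A.
Proof. rewrite meetC. apply meet0. Qed.

Lemma meet1l x : bmeet A (btop A) x = x.
Proof. rewrite meetC. apply meet1. Qed.

Lemma join0l x : bjoin A (bbot A) x = x.
Proof. rewrite joinC. apply join0. Qed.

Lemma meetDjoin_r x y z :
  bmeet A (bjoin A y z) x = bjoin A (bmeet A y x) (bmeet A z x).
Proof. rewrite meetC, meetDjoin, (meetC A x y), (meetC A x z). reflexivity. Qed.

Lemma joinDmeet x y z :
  bjoin A x (bmeet A y z) = bmeet A (bjoin A x y) (bjoin A x z).
Proof.
  symmetry. rewrite (meetDjoin A (bjoin A x y) x z), (meetC A (bjoin A x y) x), meetKjoin.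
  rewrite (meetC A (bjoin A x y) z), meetDjoin, joinA, (meetC A z x), joinKmeet.
  rewrite (meetC A z y). reflexivity.
Qed.

Lemma meetACA a b c d :
  bmeet A (bmeet A a b) (bmeet A c d) = bmeet A (bmeet A a c) (bmeet A b d).
Proof. rewrite <- !meetA. f_equal. rewrite !meetA, (meetC A b c). reflexivity. Qed.

Lemma joinACA a b c d :
  bjoin A (bjoin A a b) (bjoin A c d) = bjoin A (bjoin A a c) (bjoin A b d).
Proof. rewrite <- !joinA. f_equal. rewrite !joinA, (joinC A b c). reflexivity. Qed.

Lemma compl_unique x y :
  bmeet A x y = bbot A -> bjoin A x y = btop A -> y = bcompl A x.
Proof.
  intros Hmeet Hjoin. transitivity (bmeet A y (bcompl A x)).
  - rewrite <- (meet1 A y) at 1. rewrite <- (joinCompl A x), meetDjoin, (meetC A y x).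
    rewrite Hmeet, join0l. reflexivity.
  - rewrite (meetC A y). rewrite <- (meet1 A (bcompl A x)) at 2.
    rewrite <- Hjoin, meetDjoin, (meetC A (bcompl A x) x), meetCompl, join0l. reflexivity.
Qed.

Lemma compl_top : bcompl A (btop A) = bbot A.
Proof. symmetry. apply compl_unique; [apply meet0 | apply join0]. Qed.

Lemma compl_bot : bcompl A (bbot A) = btop A.
Proof. symmetry. apply compl_unique; [apply meet0l | apply join1]. Qed.

Lemma compl_join x y : bcompl A (bjoin A x y) = bmeet A (bcompl A x) (bcompl A y).
Proof.
  symmetry. apply compl_unique.
  - rewrite meetDjoin_r, meetA, meetCompl, meet0l.
    rewrite (meetC A (bcompl A x)), meetA, meetCompl, meet0l. apply join0.
  - rewrite joinDmeet, (joinC A x y) at 1.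
    rewrite <- !joinA, !joinCompl, !join1. apply meet1.
Qed.

Lemma ble_refl x : ble A x x.
Proof. apply meet_idem. Qed.

Lemma ble_trans x y z : ble A x y -> ble A y z -> ble A x z.
Proof.
  unfold ble. intros Hxy Hyz. rewrite <- Hxy at 1. rewrite <- meetA, Hyz, Hxy. reflexivity.
Qed.

Lemma ble_meet_l x y : ble A (bmeet A x y) x.
Proof. unfold ble. rewrite (meetC A (bmeet A x y) x), meetA, meet_idem. reflexivity. Qed.

Lemma ble_meet_r x y : ble A (bmeet A x y) y.
Proof. unfold ble. rewrite <- meetA, meet_idem. reflexivity. Qed.

Lemma ble_top x : ble A x (btop A).
Proof. apply meet1. Qed.

Lemma ble_meet2 a b a' b' :
  ble A a b -> ble A a' b' -> ble A (bmeet A a a') (bmeet A b b').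
Proof. unfold ble. intros H H'. rewrite meetACA, H, H'. reflexivity. Qed.

Lemma ble_bot x : ble A x (bbot A) -> x = bbot A.
Proof. unfold ble. rewrite meet0. intros H. symmetry. exact H. Qed.

End BooleanAlgebra.

Definition incl {T} (X Y : T -> Prop) : Prop := forall t, X t -> Y t.

Definition proper_filter (A : BA) (M : car A -> Prop) : Prop :=
  M (btop A) /\ (forall x y, ble A x y -> M x -> M y) /\
  (forall x y, M x -> M y -> M (bmeet A x y)) /\ ~ M (bbot A).

Definition ba_ultrafilter (A : BA) (M : car A -> Prop) : Prop :=
  proper_filter A M /\ forall x, M x \/ M (bcompl A x).

Section Filters.
Variable A : BA.

Lemma proper_filter_chain_union (J : Type) (C : J -> Prop) (M : J -> car A -> Prop) :
  (exists j, C j) -> (forall j, C j -> proper_filter A (M j)) ->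
  (forall i j, C i -> C j -> incl (M i) (M j) \/ incl (M j) (M i)) ->
  proper_filter A (fun x => exists j, C j /\ M j x).
Proof.
  intros [j0 Cj0] HM Hchain. repeat split.
  - exists j0. split; [exact Cj0 | apply (HM j0 Cj0)].
  - intros x y Hxy [j [Cj Mx]]. exists j. split; [exact Cj |].
    destruct (HM j Cj) as [_ [Hup _]]. exact (Hup x y Hxy Mx).
  - intros x y [i [Ci Mx]] [j [Cj My]].
    destruct (Hchain i j Ci Cj) as [Hij | Hji].
    + exists j. split; [exact Cj |]. destruct (HM j Cj) as [_ [_ [Hmeet _]]]. auto.
    + exists i. split; [exact Ci |]. destruct (HM i Ci) as [_ [_ [Hmeet _]]]. auto.
  - intros [j [Cj Mbot]]. destruct (HM j Cj) as [_ [_ [_ Hbot]]]. exact (Hbot Mbot).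
Qed.

Lemma proper_filter_adjoin (M : car A -> Prop) x :
  proper_filter A M -> ~ (exists m, M m /\ bmeet A m x = bbot A) ->
  proper_filter A (fun y => exists m, M m /\ ble A (bmeet A m x) y).
Proof.
  intros [Mtop [Mup [Mmeet Mbot]]] Hconsistent. repeat split.
  - exists (btop A). split; [exact Mtop | apply ble_top].
  - intros y z Hyz [m [Mm Hle]]. exists m. split; [exact Mm | eapply ble_trans; eauto].
  - intros y z [m [Mm Hy]] [m' [Mm' Hz]]. exists (bmeet A m m'). split; [auto |].
    rewrite <- (meet_idem A x), meetACA. apply ble_meet2; assumption.
  - intros [m [Mm Hle]]. apply Hconsistent. exists m. split; [exact Mm | apply ble_bot, Hle].
Qed.

Lemma maximal_proper_filter_ultra (M : car A -> Prop) :
  proper_filter A M -> (forall N, proper_filter A N -> incl M N -> incl N M) ->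
  ba_ultrafilter A M.
Proof.
  intros FM Mmax. split; [exact FM |]. intro x.
  destruct FM as [Mtop [Mup [Mmeet Mbot]]] eqn:EFM.
  (* Otherwise adjoining [z] would give a larger proper filter. *)
  assert (Hdisjoint : forall z, ~ M z -> exists m, M m /\ bmeet A m z = bbot A).
  { intros z Hz. apply NNPP. intro Hcons. apply Hz.
    apply (Mmax _ (proper_filter_adjoin M z FM Hcons)).
    - intros m Mm. exists m. split; [exact Mm | apply ble_meet_l].
    - exists (btop A). split; [exact Mtop | rewrite meet1l; apply ble_refl]. }
  apply NNPP. intro Hneither. apply not_or_and in Hneither.
  destruct Hneither as [Hx Hnx].
  destruct (Hdisjoint x Hx) as [m [Mm Hm]].
  destruct (Hdisjoint _ Hnx) as [m' [Mm' Hm']].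
  apply Mbot. replace (bbot A) with (bmeet A m m'); [auto |].
  rewrite <- (meet1 A (bmeet A m m')), <- (joinCompl A x), meetDjoin.
  rewrite (meetC A m m') at 1. rewrite <- (meetA A m' m x), Hm, meet0.
  rewrite <- (meetA A m m' (bcompl A x)), Hm', meet0. apply join0.
Qed.

Theorem ba_ultrafilter_extension (F0 : car A -> Prop) :
  proper_filter A F0 -> exists M, incl F0 M /\ ba_ultrafilter A M.
Proof.
  intro HF0.
  pose (P := fun M => proper_filter A M /\ incl F0 M).
  pose (R := fun s t : sig P => boolp.asbool (incl (proj1_sig s) (proj1_sig t))).
  pose (bottom := exist P F0 (conj HF0 (fun x h => h))).
  destruct (classical_sets.ZL_preorder bottom (R := R)) as [[M [FM F0M]] Mmax].
  - intros s. apply boolp.asboolT. intros x h. exact h.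
  - intros r s t Hrs Hst. apply boolp.asboolW in Hrs, Hst. apply boolp.asboolT.
    intros x h. auto.
  - intros C HC. destruct (classic (exists s, C s)) as [[s0 Cs0] | HnoC].
    + pose (Mu := fun x => exists s, C s /\ proj1_sig s x).
      assert (PMu : P Mu).
      { split.
        - apply proper_filter_chain_union.
          + exists s0. exact Cs0.
          + intros s _. apply (proj2_sig s).
          + intros s s' Cs Cs'.
            destruct (HC s s' Cs Cs') as [H | H]; apply boolp.asboolW in H; auto.
        - intros x Fx. exists s0. split; [exact Cs0 | apply (proj2_sig s0), Fx]. }
      exists (exist P Mu PMu). intros s Cs.
      apply boolp.asboolT. intros x h. exists s. auto.
    + exists bottom. intros s Cs. exfalso. apply HnoC. exists s. exact Cs.
  - exists M. split; [exact F0M |]. apply maximal_proper_filter_ultra; [exact FM |].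
    intros N FN MN.
    assert (F0N : incl F0 N) by (intros x h; apply MN, F0M, h).
    apply boolp.asboolW, (Mmax (exist P N (conj FN F0N))), boolp.asboolT. exact MN.
Qed.

End Filters.

Definition PowBA (I : Type) : BA.
Proof.
  refine (@mkBA (I -> Prop) (fun X Y i => X i \/ Y i) (fun X Y i => X i /\ Y i)
           (fun X i => ~ X i) (fun _ => False) (fun _ => True) _ _ _ _ _ _ _ _ _ _ _);
  intros; apply functional_extensionality; intro i; apply propositional_extensionality;
  tauto.
Defined.

Lemma PowBA_ble (I : Type) (X Y : I -> Prop) : incl X Y -> ble (PowBA I) X Y.
Proof.
  intro HXY. apply functional_extensionality. intro i.
  apply propositional_extensionality. simpl. split; [tauto | auto].
Qed.

Lemma set_ultrafilter_extension (I : Type) (F0 : (I -> Prop) -> Prop) :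
  proper_filter (PowBA I) F0 -> exists U, ultrafilter I U /\ incl F0 U.
Proof.
  intro HF0.
  destruct (ba_ultrafilter_extension (PowBA I) F0 HF0)
    as [U [F0U [[Utop [Uup [Umeet Ubot]]] Uprime]]].
  exists U. split; [| exact F0U]. repeat split.
  - exact Utop.
  - exact Ubot.
  - intros X Y UX HXY. exact (Uup X Y (PowBA_ble I X Y HXY) UX).
  - exact Umeet.
  - exact Uprime.
Qed.

Section Ultrafilter.
Variables (I : Type) (U : (I -> Prop) -> Prop).
Hypothesis HU : ultrafilter I U.

Lemma uf_mono (X Y : I -> Prop) : U X -> incl X Y -> U Y.
Proof. destruct HU as [_ [_ [Hmono _]]]. apply Hmono. Qed.

Lemma uf_meet (X Y : I -> Prop) : U X -> U Y -> U (fun i => X i /\ Y i).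
Proof. destruct HU as [_ [_ [_ [Hmeet _]]]]. apply Hmeet. Qed.

Lemma uf_all (X : I -> Prop) : (forall i, X i) -> U X.
Proof. intro HX. destruct HU as [Htop _]. apply (uf_mono _ _ Htop). intros i _. apply HX. Qed.

Lemma uf_inhabited (X : I -> Prop) : U X -> exists i, X i.
Proof.
  intro UX. apply NNPP. intro Hempty. destruct HU as [_ [Hbot _]]. apply Hbot.
  apply (uf_mono _ _ UX). intros i Xi. apply Hempty. exists i. exact Xi.
Qed.

End Ultrafilter.

Section Quotient.
Variables (P : BA) (R : car P -> car P -> Prop).
Hypothesis Rrefl : forall x, R x x.
Hypothesis Rsym : forall x y, R x y -> R y x.
Hypothesis Rtrans : forall x y z, R x y -> R y z -> R x z.
Hypothesis Rjoin : forall x y x' y', R x x' -> R y y' -> R (bjoin P x y) (bjoin P x' y').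
Hypothesis Rmeet : forall x y x' y', R x x' -> R y y' -> R (bmeet P x y) (bmeet P x' y').
Hypothesis Rcompl : forall x x', R x x' -> R (bcompl P x) (bcompl P x').

Definition quot_car := {S : car P -> Prop | exists x, S = R x}.

Definition quot_class (x : car P) : quot_car := exist _ (R x) (ex_intro _ x eq_refl).

Lemma quot_class_eq x y : quot_class x = quot_class y <-> R x y.
Proof.
  split.
  - intro E. apply (f_equal (@proj1_sig _ _)) in E. simpl in E.
    rewrite E. apply Rrefl.
  - intro Rxy. unfold quot_class.
    assert (E : R x = R y).
    { apply functional_extensionality. intro z. apply propositional_extensionality.
      split; eauto. }
    apply eq_sig_hprop; [intros; apply proof_irrelevance | exact E].
Qed.

Definition quot_repr (S : quot_car) : car P :=
  proj1_sig (constructive_indefinite_description _ (proj2_sig S)).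

Lemma quot_reprK S : quot_class (quot_repr S) = S.
Proof.
  unfold quot_repr. destruct (constructive_indefinite_description _ (proj2_sig S)) as [x Hx].
  destruct S as [S HS]. simpl in *. subst S. unfold quot_class. f_equal.
  apply proof_irrelevance.
Qed.

Definition quot_join S T := quot_class (bjoin P (quot_repr S) (quot_repr T)).
Definition quot_meet S T := quot_class (bmeet P (quot_repr S) (quot_repr T)).
Definition quot_compl S := quot_class (bcompl P (quot_repr S)).

Lemma quot_repr_class x : R (quot_repr (quot_class x)) x.
Proof. apply quot_class_eq, quot_reprK. Qed.

Lemma quot_join_class x y : quot_join (quot_class x) (quot_class y) = quot_class (bjoin P x y).
Proof. apply quot_class_eq, Rjoin; apply quot_repr_class. Qed.

Lemma quot_meet_class x y : quot_meet (quot_class x) (quot_class y) = quot_class (bmeet P x y).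
Proof. apply quot_class_eq, Rmeet; apply quot_repr_class. Qed.

Lemma quot_compl_class x : quot_compl (quot_class x) = quot_class (bcompl P x).
Proof. apply quot_class_eq, Rcompl, quot_repr_class. Qed.

Ltac quot_elim := repeat match goal with
  | S : quot_car |- _ => rewrite <- (quot_reprK S); generalize (quot_repr S); clear S; intro
  end; repeat rewrite ?quot_join_class, ?quot_meet_class, ?quot_compl_class.

Definition quotBA : BA.
Proof.
  refine (@mkBA quot_car quot_join quot_meet quot_compl
            (quot_class (bbot P)) (quot_class (btop P)) _ _ _ _ _ _ _ _ _ _ _);
  intros; quot_elim; f_equal.
  all: first [ apply joinC | apply meetC | apply joinA | apply meetA | apply joinKmeet
             | apply meetKjoin | apply meetDjoin | apply join0 | apply meet1
             | apply joinCompl | apply meetCompl ].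
Defined.

Lemma quot_class_hom : is_hom P quotBA quot_class.
Proof.
  repeat split; intros; symmetry;
    first [apply quot_join_class | apply quot_meet_class | apply quot_compl_class].
Qed.

Lemma quot_class_surj : @surj (car P) (car quotBA) quot_class.
Proof. intro S. exists (quot_repr S). apply quot_reprK. Qed.

End Quotient.

Lemma ultraproduct_exists (I : Type) (A : I -> BA) (F : forall i, car (A i) -> Prop)
  (U : (I -> Prop) -> Prop) :
  ultrafilter I U -> exists B G h, is_ultraproduct I A F U B G h.
Proof.
  intro HU.
  pose (R := fun x y : car (prodBA I A) => U (fun i => x i = y i)).
  assert (Rrefl : forall x, R x x) by (intro x; apply (uf_all I U HU); reflexivity).
  assert (Rsym : forall x y, R x y -> R y x)
    by (intros x y Rxy; apply (uf_mono I U HU _ _ Rxy); intros i E; symmetry; exact E).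
  assert (Rcong2 : forall (op : forall i, car (A i) -> car (A i) -> car (A i)) x y z w,
            R x z -> R y w -> R (fun i => op i (x i) (y i)) (fun i => op i (z i) (w i))).
  { intros op x y z w Rxz Ryw. apply (uf_mono I U HU _ _ (uf_meet I U HU _ _ Rxz Ryw)).
    intros i [E E']. simpl. rewrite E, E'. reflexivity. }
  assert (Rtrans : forall x y z, R x y -> R y z -> R x z).
  { intros x y z Rxy Ryz. apply (uf_mono I U HU _ _ (uf_meet I U HU _ _ Rxy Ryz)).
    intros i [E E']. simpl. rewrite E. exact E'. }
  assert (Rcompl : forall x x', R x x' -> R (bcompl _ x) (bcompl _ x')).
  { intros x x' Rxx'. apply (uf_mono I U HU _ _ Rxx'). intros i E. simpl.
    unfold pcompl. rewrite E. reflexivity. }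
  pose (Q := quotBA (prodBA I A) R Rrefl Rsym Rtrans
               (Rcong2 (fun i => bjoin (A i))) (Rcong2 (fun i => bmeet (A i))) Rcompl).
  pose (q := quot_class (prodBA I A) R : car (prodBA I A) -> car Q).
  assert (q_eq : forall x y, q x = q y <-> R x y) by (apply quot_class_eq; assumption).
  exists Q, (fun S => exists x, S = q x /\ U (fun i => F i (x i))), q.
  split; [apply quot_class_hom | split; [apply quot_class_surj | split]].
  - exact q_eq.
  - intro x. split.
    + intros [y [E Uy]]. apply q_eq in E.
      apply (uf_mono I U HU _ _ (uf_meet I U HU _ _ E Uy)).
      intros i [Exy Fy]. simpl. rewrite Exy. exact Fy.
    + intro Ux. exists x. split; [reflexivity | exact Ux].
Qed.

Lemma hom_comp (A B C : BA) (f : car A -> car B) (g : car B -> car C) :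
  is_hom A B f -> is_hom B C g -> is_hom A C (fun x => g (f x)).
Proof.
  intros [fj [fm [fc [f0 f1]]]] [gj [gm [gc [g0 g1]]]].
  repeat split; intros; rewrite ?fj, ?fm, ?fc, ?f0, ?f1; auto.
Qed.

Lemma hom_into_prod (A : BA) (I : Type) (C : I -> BA) (f : forall i, car A -> car (C i)) :
  (forall i, is_hom A (C i) (f i)) -> is_hom A (prodBA I C) (fun x i => f i x).
Proof.
  intro Hf. repeat split; intros; apply functional_extensionality_dep; intro i;
    destruct (Hf i) as [fj [fm [fc [f0 f1]]]]; simpl;
    unfold pjoin, pmeet, pcompl, pbot, ptop; auto.
Qed.

Lemma hom_factor (A B C : BA) (h : car A -> car B) (k : car A -> car C) :
  is_hom A B h -> surj h -> is_hom A C k -> (forall x y, h x = h y -> k x = k y) ->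
  exists e, is_hom B C e /\ forall x, e (h x) = k x.
Proof.
  intros [hj [hm [hc [h0 h1]]]] hs [kj [km [kc [k0 k1]]]] hk.
  pose (e := fun b => k (proj1_sig (constructive_indefinite_description _ (hs b)))).
  assert (eh : forall x, e (h x) = k x).
  { intro x. unfold e. destruct (constructive_indefinite_description _ (hs (h x))) as [y Hy].
    apply hk, Hy. }
  exists e. split; [| exact eh]. repeat split.
  - intros b b'. destruct (hs b) as [x <-]. destruct (hs b') as [y <-].
    rewrite <- hj, !eh. apply kj.
  - intros b b'. destruct (hs b) as [x <-]. destruct (hs b') as [y <-].
    rewrite <- hm, !eh. apply km.
  - intros b. destruct (hs b) as [x <-]. rewrite <- hc, !eh. apply kc.
  - rewrite <- h0, eh. exact k0.
  - rewrite <- h1, eh. exact k1.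
Qed.

Lemma hom_top_proper_filter (A B : BA) (h : car A -> car B) :
  is_hom A B h -> btop B <> bbot B -> proper_filter A (fun x => h x = btop B).
Proof.
  intros [hj [hm [hc [h0 h1]]]] Hntriv. repeat split.
  - exact h1.
  - intros x y Hxy Hx. unfold ble in Hxy.
    assert (E : h x = bmeet B (h x) (h y)) by (rewrite <- hm, Hxy; reflexivity).
    rewrite Hx, meet1l in E. symmetry. exact E.
  - intros x y Hx Hy. rewrite hm, Hx, Hy. apply meet1.
  - intro H. apply Hntriv. rewrite <- H. exact h0.
Qed.

Section Indicator.
Variables (A C : BA) (phi : car A -> Prop).
Hypothesis Hphi : ba_ultrafilter A phi.

Lemma ba_ultrafilter_meet x y : phi (bmeet A x y) <-> phi x /\ phi y.
Proof.
  destruct Hphi as [[_ [Hup [Hmeet _]]] _]. split.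
  - intro H. split; [apply (Hup _ _ (ble_meet_l A x y)) | apply (Hup _ _ (ble_meet_r A x y))];
      exact H.
  - intros [Hx Hy]. auto.
Qed.

Lemma ba_ultrafilter_compl x : phi (bcompl A x) <-> ~ phi x.
Proof.
  destruct Hphi as [[_ [_ [Hmeet Hbot]]] Hprime]. split.
  - intros Hnx Hx. apply Hbot. rewrite <- (meetCompl A x). auto.
  - intro Hx. destruct (Hprime x); tauto.
Qed.

Lemma ba_ultrafilter_join x y : phi (bjoin A x y) <-> phi x \/ phi y.
Proof.
  pose proof (ba_ultrafilter_compl (bjoin A x y)) as Hcompl.
  rewrite compl_join, ba_ultrafilter_meet, !ba_ultrafilter_compl in Hcompl.
  destruct (classic (phi x)), (classic (phi y)), (classic (phi (bjoin A x y))); tauto.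
Qed.

Definition indicator (x : car A) : car C :=
  if excluded_middle_informative (phi x) then btop C else bbot C.

Lemma indicator_hom : is_hom A C indicator.
Proof.
  destruct Hphi as [[Htop [_ [_ Hbot]]] _].
  unfold indicator. repeat split.
  - intros x y. pose proof (ba_ultrafilter_join x y).
    destruct (excluded_middle_informative (phi (bjoin A x y)));
    destruct (excluded_middle_informative (phi x));
    destruct (excluded_middle_informative (phi y));
    first [exfalso; tauto | rewrite ?join1, ?join0; reflexivity].
  - intros x y. pose proof (ba_ultrafilter_meet x y).
    destruct (excluded_middle_informative (phi (bmeet A x y)));
    destruct (excluded_middle_informative (phi x));
    destruct (excluded_middle_informative (phi y));
    first [exfalso; tauto | rewrite ?meet1, ?meet0; reflexivity].
  - intros x. pose proof (ba_ultrafilter_compl x).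
    destruct (excluded_middle_informative (phi (bcompl A x)));
    destruct (excluded_middle_informative (phi x));
    first [exfalso; tauto | rewrite ?compl_top, ?compl_bot; reflexivity].
  - destruct (excluded_middle_informative (phi (bbot A))); tauto.
  - destruct (excluded_middle_informative (phi (btop A))); tauto.
Qed.

End Indicator.

Section Mixing.
Variables (A C : BA) (c : car C).

Lemma mix_meet p q r s :
  bmeet C (bjoin C (bmeet C p c) (bmeet C q (bcompl C c)))
          (bjoin C (bmeet C r c) (bmeet C s (bcompl C c))) =
  bjoin C (bmeet C (bmeet C p r) c) (bmeet C (bmeet C q s) (bcompl C c)).
Proof.
  set (nc := bcompl C c).
  rewrite meetDjoin, !meetDjoin_r.
  rewrite (meetACA C p c r c), (meetACA C q nc r c), (meetACA C p c s nc), (meetACA C q nc s nc).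
  rewrite !meet_idem. unfold nc. rewrite (meetC C (bcompl C c) c), meetCompl, !meet0.
  rewrite join0, join0l. reflexivity.
Qed.

Lemma mix_hom (a b : car A -> car C) : is_hom A C a -> is_hom A C b ->
  is_hom A C (fun x => bjoin C (bmeet C (a x) c) (bmeet C (b x) (bcompl C c))).
Proof.
  intros [aj [am [ac [a0 a1]]]] [bj [bm [bc [b0 b1]]]]. repeat split.
  - intros x y. rewrite aj, bj, !meetDjoin_r. apply joinACA.
  - intros x y. rewrite am, bm. symmetry. apply mix_meet.
  - intros x. rewrite ac, bc. apply compl_unique.
    + rewrite mix_meet, !meetCompl, !meet0l. apply join0.
    + rewrite joinACA, <- !meetDjoin_r, !joinCompl, !meet1l. apply joinCompl.
  - rewrite a0, b0, !meet0l. apply join0.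
  - rewrite a1, b1, !meet1l. apply joinCompl.
Qed.

End Mixing.

Section StrictImage.
Variables (A B : BA) (F : car A -> Prop) (G : car B -> Prop) (h : car A -> car B).
Hypothesis hh : is_hom A B h.
Hypothesis hs : surj h.
Hypothesis hst : strict A B F G h.

Definition kernel_tails (X : car A -> Prop) : Prop :=
  exists d, h d = btop B /\ forall c, h c = btop B -> ble A c d -> X c.

Lemma kernel_tails_proper : proper_filter (PowBA (car A)) kernel_tails.
Proof.
  destruct hh as [_ [hm [_ [_ h1]]]]. repeat split.
  - exists (btop A). split; [exact h1 | intros; exact I].
  - intros X Y HXY [d [Hd HX]]. exists d. split; [exact Hd |]. intros c Hc Hcd.
    apply (f_equal (fun Z => Z c)) in HXY. simpl in HXY.
    pose proof (HX c Hc Hcd) as Xc. rewrite <- HXY in Xc. apply Xc.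
  - intros X Y [d [Hd HX]] [d' [Hd' HY]]. exists (bmeet A d d'). split.
    + rewrite hm, Hd, Hd'. apply meet1.
    + intros c Hc Hcd. split.
      * apply HX; [exact Hc | eapply ble_trans; [exact Hcd | apply ble_meet_l]].
      * apply HY; [exact Hc | eapply ble_trans; [exact Hcd | apply ble_meet_r]].
  - intros [d [Hd HX]]. exact (HX d Hd (ble_refl A d)).
Qed.

Lemma kernel_tails_kernel : kernel_tails (fun c => h c = btop B).
Proof.
  destruct hh as [_ [_ [_ [_ h1]]]].
  exists (btop A). split; [exact h1 | intros c Hc _; exact Hc].
Qed.

Lemma kernel_tails_meet_agree x y :
  h x = h y -> kernel_tails (fun c => bmeet A x c = bmeet A y c).
Proof.
  destruct hh as [hj [hm [hc _]]]. intro Hxy.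
  set (d := bjoin A (bmeet A x y) (bmeet A (bcompl A x) (bcompl A y))).
  assert (Hxd : bmeet A x d = bmeet A x y).
  { unfold d. rewrite meetDjoin, meetA, meet_idem, meetA, meetCompl, meet0l. apply join0. }
  assert (Hyd : bmeet A y d = bmeet A x y).
  { unfold d. rewrite meetDjoin, (meetC A x y), (meetA A y y x), meet_idem.
    rewrite (meetC A (bcompl A x) (bcompl A y)), (meetA A y (bcompl A y)), meetCompl, meet0l.
    apply join0. }
  exists d. split.
  - unfold d. rewrite hj, !hm, !hc, Hxy, !meet_idem. apply joinCompl.
  - intros c _ Hcd. unfold ble in Hcd.
    rewrite <- Hcd, (meetC A c d), !meetA, Hxd, Hyd. reflexivity.
Qed.

Section Mixer.
Variable phi : car A -> Prop.
Hypothesis Hphi : ba_ultrafilter A phi.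
Hypothesis Hker_phi : forall c, h c = btop B -> phi c.

Definition mixer (c x : car A) : car A :=
  bjoin A (bmeet A x c) (bmeet A (indicator A A phi x) (bcompl A c)).

Lemma mixer_hom c : is_hom A A (mixer c).
Proof.
  apply (mix_hom A A c (fun x => x)); [repeat split | apply indicator_hom, Hphi].
Qed.

Lemma h_mixer c x : h c = btop B -> h (mixer c x) = h x.
Proof.
  destruct hh as [hj [hm [hc _]]]. intro Hc. unfold mixer.
  rewrite hj, !hm, hc, Hc, compl_top, meet0, join0, meet1. reflexivity.
Qed.

Lemma mixer_agree c x y : phi c -> bmeet A x c = bmeet A y c -> mixer c x = mixer c y.
Proof.
  intros Hc Exy. destruct (indicator_hom A A phi Hphi) as [_ [tm _]].
  assert (Htc : indicator A A phi c = btop A).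
  { unfold indicator. destruct (excluded_middle_informative (phi c)); tauto. }
  assert (Ht : indicator A A phi x = indicator A A phi y).
  { rewrite <- (meet1 A (indicator A A phi x)), <- (meet1 A (indicator A A phi y)), <- Htc.
    rewrite <- !tm, Exy. reflexivity. }
  unfold mixer. rewrite Exy, Ht. reflexivity.
Qed.

Lemma strict_image_embeds (U : (car A -> Prop) -> Prop) (Q : BA) (G' : car Q -> Prop)
    (q : car (prodBA (car A) (fun _ => A)) -> car Q) :
  ultrafilter (car A) U -> incl kernel_tails U ->
  is_ultraproduct (car A) (fun _ => A) (fun _ => F) U Q G' q ->
  exists e, is_hom B Q e /\ inj e /\ forall b, G b <-> G' (e b).
Proof.
  intros HU Htails [qhom [_ [qeq qG]]].
  pose proof (Htails _ kernel_tails_kernel) as Uker.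
  pose (mixers := fun x => (fun c => mixer c x) : car (prodBA (car A) (fun _ => A))).
  destruct (hom_factor A B Q h (fun x => q (mixers x)) hh hs) as [e [ehom eh]].
  - apply (hom_comp _ _ _ mixers q); [| exact qhom].
    apply hom_into_prod. exact mixer_hom.
  - intros x y Hxy. apply qeq, Htails.
    destruct (kernel_tails_meet_agree x y Hxy) as [d [Hd Hagree]].
    exists d. split; [exact Hd |]. intros c Hc Hcd.
    apply mixer_agree; [apply Hker_phi, Hc | apply Hagree; assumption].
  - exists e. split; [exact ehom | split].
    + intros b b' E. destruct (hs b) as [x <-]. destruct (hs b') as [y <-].
      rewrite !eh in E. apply qeq in E.
      destruct (uf_inhabited _ _ HU _ (uf_meet _ _ HU _ _ E Uker)) as [c [Ec Hc]].
      unfold mixers in Ec.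
      rewrite <- (h_mixer c x Hc), <- (h_mixer c y Hc), Ec. reflexivity.
    + intro b. destruct (hs b) as [x <-]. rewrite eh, qG. unfold mixers. split.
      * intro Gx. apply (uf_mono _ _ HU _ _ Uker). intros c Hc.
        apply hst. rewrite h_mixer; assumption.
      * intro UF. destruct (uf_inhabited _ _ HU _ (uf_meet _ _ HU _ _ UF Uker)) as [c [Fc Hc]].
        apply hst in Fc. rewrite h_mixer in Fc; assumption.
Qed.

End Mixer.

Lemma strict_image_embeds_in_ultrapower :
  btop B <> bbot B ->
  exists U Q G' q e, ultrafilter (car A) U /\
    is_ultraproduct (car A) (fun _ => A) (fun _ => F) U Q G' q /\
    is_hom B Q e /\ inj e /\ forall b, G b <-> G' (e b).
Proof.
  intro Hntriv.
  destruct (ba_ultrafilter_extension A _ (hom_top_proper_filter A B h hh Hntriv))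
    as [phi [Hker_phi Hphi]].
  destruct (set_ultrafilter_extension _ _ kernel_tails_proper) as [U [HU Htails]].
  destruct (ultraproduct_exists (car A) (fun _ => A) (fun _ => F) U HU) as [Q [G' [q Hq]]].
  destruct (strict_image_embeds phi Hphi Hker_phi U Q G' q HU Htails Hq) as [e He].
  exists U, Q, G', q, e. auto.
Qed.

End StrictImage.

Lemma filter_class_full (K : StrClass) :
  closed_prod K -> closed_shpre K -> forall (B : BA) (G : car B -> Prop), (forall b, G b) -> K B G.
Proof.
  intros Kprod Kpre B G HG.
  pose (E := fun e : Empty_set => match e return BA with end).
  pose (FE := fun e : Empty_set => match e return car (E e) -> Prop with end).
  pose (k := fun _ : car B => (fun e : Empty_set => match e return car (E e) with end)).
  apply (Kpre B (prodBA Empty_set E) G (prodF Empty_set E FE) k).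
  - repeat split; intros; apply functional_extensionality_dep; intros [].
  - intro y. exists (bbot B). apply functional_extensionality_dep. intros [].
  - intro x. split; [intros _ [] | intros _; apply HG].
  - apply Kprod. intros [].
Qed.

Theorem mainTheorem19 (K : StrClass) :
  finitary_filter_class K ->
  (forall (A : BA) (F : car A -> Prop), K A F -> BA_inf A F) ->
  logical_class K.
Proof.
  intros [HK Kultra] Kinf. split; [exact HK |].
  destruct HK as [_ [Ksub [Kprod Kpre]]].
  intros A B F G h hh hs hst KAF.
  destruct (classic (btop B = bbot B)) as [Htriv | Hntriv].
  - apply (filter_class_full K Kprod Kpre). intro b.
    destruct (Kinf A F KAF) as [[a Fa] _]. apply hst in Fa.
    assert (Hbot : forall z, z = bbot B) by (intro z; rewrite <- (meet1 B z), Htriv; apply meet0).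
    rewrite (Hbot b), <- (Hbot (h a)). exact Fa.
  - destruct (strict_image_embeds_in_ultrapower A B F G h hh hs hst Hntriv)
      as (U & Q & G' & q & e & HU & Hq & ehom & einj & eG).
    replace G with (fun b => G' (e b)).
    + exact (Ksub Q B G' e ehom einj (Kultra _ _ _ _ _ _ _ HU (fun _ => KAF) Hq)).
    + apply functional_extensionality. intro b.
      apply propositional_extensionality. symmetry. apply eG.
Qed.
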